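(* Let $X$ be a $B_3$ simplicial complex satisfying hypotheses (1)–(6) below. Then $X$ is a flag complex. (1) the link of every vertex is nonempty and connected; (2) links of type $\hat s_1$ vertices have girth at least $8$; (3) the link of a type $\hat s_2$ vertex is complete bipartite with parts the link-vertices of type $\hat s_1$ and of type $\hat s_3$, and contains an embedded 4-cycle; (4) links of type $\hat s_3$ vertices have girth at least $6$; (5a) every closed edge path $x_1,y_1,x_2,y_2$ ($x_i$ type $\hat s_3$, $y_i$ type $\hat s_1$) admits a type $\hat s_2$ vertex $m$ with all $\{m,x_i,y_j\}$ 2-simplices; (5b) every closed edge path $x_1,y_1,x_2,y_2,x_3,y_3$ ($x_i$ type $\hat s_3$, $y_i$ type $\hat s_1$) admits a type $\hat s_3$ vertex $c$ and type $\hat s_2$ vertices $m_1,m_2,m_3$ with $\{m_i,x_i,y_{i-1}\},\{m_i,x_i,y_i\},\{m_i,c,y_{i-1}\},\{m_i,c,y_i\}$ 2-simplices (indices mod 3); (5c) every closed edge path $x_1,y_1,x_2,w,x_3,y_2,x_4,y_3$ ($x_i$ type $\hat s_3$, $y_i$ type $\hat s_2$, $w$ type $\hat s_1$) admits a type $\hat s_1$ vertex $z$ and type $\hat s_2$ vertex $m$ with $\{z,x_1,y_1\},\{z,y_1,x_2\},\{z,x_2,m\},\{z,m,x_3\},\{z,x_3,y_2\},\{z,y_2,x_4\},\{z,x_4,y_3\},\{z,y_3,x_1\},\{m,x_2,w\},\{m,w,x_3\}$ 2-simplices; (6) there is no embedded 10-edge closed edge path whose vertices alternate between types $\hat s_3$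 and $\hat s_2$.
   Context: Let $\Delta$ be the spherical triangle on vertices labelled $\hat s_1,\hat s_2,\hat s_3$ with interior angles $\pi/4,\pi/2,\pi/3$ respectively. A $B_3$ simplicial complex is a pure 2-dimensional simplicial complex $X$ with, for each 2-simplex $\sigma$, a simplicial isomorphism $m_\sigma:\sigma\to\Delta$ such that $m_\sigma(v)=m_\tau(v)$ whenever $v\in\sigma\cap\tau$; $m_\sigma(v)$ is the type of $v$. The link $lk(v,X)$ is the graph whose vertices are edges of $X$ at $v$ and whose edges are 2-simplices at $v$; link vertices inherit types from the other endpoint. A simplicial complex is flag if every finite set of pairwise adjacent vertices spans a simplex. *)

From Stdlib Require Import List Arith Relations.
Import ListNotations.

Inductive styp : Type := s1 | s2 | s3.

Section B3.
Context {V : Type}.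

(* A B_3 simplicial complex on the vertex type V is given by a type function
   [typ] and the set of its 2-simplices, each 2-simplex {a,b,c} being recorded
   (uniquely) as [tri a b c] with a, b, c of types s1, s2, s3 respectively.
   Purity: every vertex lies in a 2-simplex (every edge is by definition a face
   of a 2-simplex). *)
Definition B3_complex (typ : V -> styp) (tri : V -> V -> V -> Prop) : Prop :=
  (forall a b c, tri a b c -> typ a = s1 /\ typ b = s2 /\ typ c = s3) /\
  (forall v, exists a b c, tri a b c /\ In v [a; b; c]).

Variable tri : V -> V -> V -> Prop.

Definition adj (x y : V) : Prop :=
  x <> y /\ exists a b c, tri a b c /\ In x [a; b; c] /\ In y [a; b; c].

Definition face3 (x y z : V) : Prop :=
  exists a b c, tri a b c /\ In x [a; b; c] /\ In y [a; b; c] /\ In z [a; b; c]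
    /\ x <> y /\ y <> z /\ x <> z.

Definition is_simplex (l : list V) : Prop :=
  l <> [] /\ exists a b c, tri a b c /\ forall x, In x l -> In x [a; b; c].

Definition flag : Prop :=
  forall l : list V, l <> [] ->
    (forall x y, In x l -> In y l -> x <> y -> adj x y) -> is_simplex l.

(* The link lk(v,X): its vertices are (the other endpoints u of) the edges {v,u}
   of X, i.e. the u with [adj v u]; its edges are the 2-simplices {v,u,w}. *)
Definition lk_vert (v u : V) : Prop := adj v u.
Definition lk_edge (v u w : V) : Prop := face3 v u w.

Definition lk_nonempty_connected (v : V) : Prop :=
  (exists u, lk_vert v u) /\
  (forall u w, lk_vert v u -> lk_vert v w -> clos_refl_trans V (lk_edge v) u w).

End B3.

Definition cycle_in {V : Type} (E : V -> V -> Prop) (n : nat) : Prop :=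
  exists f : nat -> V,
    (forall i j, i < n -> j < n -> f i = f j -> i = j) /\
    (forall i, i < n -> E (f i) (f (S i mod n))).

Definition girth_ge {V : Type} (E : V -> V -> Prop) (k : nat) : Prop :=
  forall n, 3 <= n -> n < k -> ~ cycle_in E n.

(* Adjacent vertices of a B_3 complex have different types, so a clique has at
   most one vertex of each type.  A clique meeting at most two types lies in the
   2-simplex witnessing its edge (or, for a single vertex, given by purity).  A
   clique x, y, z of types s1, s2, s3 is a 2-simplex because lk(y) is complete
   bipartite between its vertices of types s1 and s3, so x and z span an edge of
   lk(y). *)
From Stdlib Require Import List Arith Relations Classical.
Import ListNotations.

Section Flag.

Variables (V : Type) (typ : V -> styp) (tri : V -> V -> V -> Prop).
Hypothesis HX : B3_complex typ tri.

Definition clique (l : list V) : Prop :=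
  forall x y, In x l -> In y l -> x <> y -> adj tri x y.

Definition covered_by_tri (l : list V) : Prop :=
  exists a b c, tri a b c /\ forall x, In x l -> In x [a; b; c].

Lemma tri_typ_inj a b c x y :
  tri a b c -> In x [a; b; c] -> In y [a; b; c] -> typ x = typ y -> x = y.
Proof.
  intros Habc Hx Hy.
  destruct (proj1 HX a b c Habc) as (Ta & Tb & Tc).
  simpl in Hx, Hy. intuition (subst; congruence).
Qed.

Lemma adj_typ_neq x y : adj tri x y -> typ x <> typ y.
Proof.
  intros (Hne & a & b & c & Habc & Hx & Hy) T.
  exact (Hne (tri_typ_inj a b c x y Habc Hx Hy T)).
Qed.

Lemma clique_typ_inj l x y :
  clique l -> In x l -> In y l -> typ x = typ y -> x = y.
Proof.
  intros Hl Hx Hy T.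
  destruct (classic (x = y)) as [E | E]; [exact E |].
  destruct (adj_typ_neq x y (Hl x y Hx Hy E) T).
Qed.

Lemma exists_typ_rep (l : list V) t :
  l <> [] -> exists u, In u l /\ forall v, In v l -> typ v = t -> typ u = t.
Proof.
  intros Hne.
  destruct (classic (exists v, In v l /\ typ v = t)) as [[v [Hv Tv]] | N].
  - exists v. split; [exact Hv | intros; exact Tv].
  - destruct l as [| h l]; [congruence |].
    exists h. split; [left; reflexivity |].
    intros v Hv Tv. destruct N. exists v. auto.
Qed.

Lemma clique_two_types_covered l t1 t2 :
  l <> [] -> clique l -> (forall v, In v l -> typ v = t1 \/ typ v = t2) ->
  covered_by_tri l.
Proof.
  intros Hne Hl Ht.
  destruct (exists_typ_rep l t1 Hne) as [u [Hu Ru]].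
  destruct (exists_typ_rep l t2 Hne) as [w [Hw Rw]].
  assert (Huw : exists a b c, tri a b c /\ In u [a; b; c] /\ In w [a; b; c]).
  { destruct (classic (u = w)) as [<- | E].
    - destruct (proj2 HX u) as (a & b & c & Habc & Hua). exists a, b, c. auto.
    - exact (proj2 (Hl u w Hu Hw E)). }
  destruct Huw as (a & b & c & Habc & Hua & Hwa).
  exists a, b, c. split; [exact Habc |].
  intros v Hv. destruct (Ht v Hv) as [T | T].
  - rewrite (clique_typ_inj l v u Hl Hv Hu); [exact Hua |].
    rewrite T. symmetry. exact (Ru v Hv T).
  - rewrite (clique_typ_inj l v w Hl Hv Hw); [exact Hwa |].
    rewrite T. symmetry. exact (Rw v Hv T).
Qed.

Hypothesis s2_link_complete : forall y x z,
  typ y = s2 -> adj tri y x -> adj tri y z -> typ x = s1 -> typ z = s3 ->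
  face3 tri y x z.

Lemma clique_three_types_covered l x y z :
  clique l -> In x l -> In y l -> In z l ->
  typ x = s1 -> typ y = s2 -> typ z = s3 -> covered_by_tri l.
Proof.
  intros Hl Hx Hy Hz Tx Ty Tz.
  assert (Ayx : adj tri y x) by (apply Hl; auto; intros ->; congruence).
  assert (Ayz : adj tri y z) by (apply Hl; auto; intros ->; congruence).
  destruct (s2_link_complete y x z Ty Ayx Ayz Tx Tz)
    as (a & b & c & Habc & Hya & Hxa & Hza & _).
  exists a, b, c. split; [exact Habc |].
  intros v Hv. destruct (typ v) eqn:Tv.
  - rewrite (clique_typ_inj l v x); auto; congruence.
  - rewrite (clique_typ_inj l v y); auto; congruence.
  - rewrite (clique_typ_inj l v z); auto; congruence.
Qed.

Lemma clique_covered l : l <> [] -> clique l -> covered_by_tri l.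
Proof.
  intros Hne Hl.
  destruct (classic (exists x, In x l /\ typ x = s1)) as [[x [Hx Tx]] | N1].
  2: { apply (clique_two_types_covered l s2 s3 Hne Hl).
       intros v Hv. destruct (typ v) eqn:Tv; auto. destruct N1. eauto. }
  destruct (classic (exists y, In y l /\ typ y = s2)) as [[y [Hy Ty]] | N2].
  2: { apply (clique_two_types_covered l s1 s3 Hne Hl).
       intros v Hv. destruct (typ v) eqn:Tv; auto. destruct N2. eauto. }
  destruct (classic (exists z, In z l /\ typ z = s3)) as [[z [Hz Tz]] | N3].
  2: { apply (clique_two_types_covered l s1 s2 Hne Hl).
       intros v Hv. destruct (typ v) eqn:Tv; auto. destruct N3. eauto. }
  exact (clique_three_types_covered l x y z Hl Hx Hy Hz Tx Ty Tz).
Qed.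

End Flag.

Theorem mainTheorem4 (V : Type) (typ : V -> styp) (tri : V -> V -> V -> Prop)
  (HX : B3_complex typ tri)
  (* (1) *)
  (H1 : forall v, lk_nonempty_connected tri v)
  (* (2) *)
  (H2 : forall v, typ v = s1 -> girth_ge (lk_edge tri v) 8)
  (* (3) *)
  (H3 : forall v, typ v = s2 ->
     (forall u w, lk_vert tri v u -> lk_vert tri v w ->
        (lk_edge tri v u w <->
           ((typ u = s1 /\ typ w = s3) \/ (typ u = s3 /\ typ w = s1)))) /\
     cycle_in (lk_edge tri v) 4)
  (* (4) *)
  (H4 : forall v, typ v = s3 -> girth_ge (lk_edge tri v) 6)
  (* (5a) *)
  (H5a : forall x1 y1 x2 y2,
     typ x1 = s3 -> typ x2 = s3 -> typ y1 = s1 -> typ y2 = s1 ->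
     NoDup [x1; y1; x2; y2] ->
     adj tri x1 y1 -> adj tri y1 x2 -> adj tri x2 y2 -> adj tri y2 x1 ->
     exists m, typ m = s2 /\
       face3 tri m x1 y1 /\ face3 tri m x1 y2 /\
       face3 tri m x2 y1 /\ face3 tri m x2 y2)
  (* (5b) *)
  (H5b : forall x1 y1 x2 y2 x3 y3,
     typ x1 = s3 -> typ x2 = s3 -> typ x3 = s3 ->
     typ y1 = s1 -> typ y2 = s1 -> typ y3 = s1 ->
     NoDup [x1; y1; x2; y2; x3; y3] ->
     adj tri x1 y1 -> adj tri y1 x2 -> adj tri x2 y2 -> adj tri y2 x3 ->
     adj tri x3 y3 -> adj tri y3 x1 ->
     exists c m1 m2 m3, typ c = s3 /\ typ m1 = s2 /\ typ m2 = s2 /\ typ m3 = s2 /\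
       face3 tri m1 x1 y3 /\ face3 tri m1 x1 y1 /\
       face3 tri m1 c y3 /\ face3 tri m1 c y1 /\
       face3 tri m2 x2 y1 /\ face3 tri m2 x2 y2 /\
       face3 tri m2 c y1 /\ face3 tri m2 c y2 /\
       face3 tri m3 x3 y2 /\ face3 tri m3 x3 y3 /\
       face3 tri m3 c y2 /\ face3 tri m3 c y3)
  (* (5c) *)
  (H5c : forall x1 y1 x2 w x3 y2 x4 y3,
     typ x1 = s3 -> typ x2 = s3 -> typ x3 = s3 -> typ x4 = s3 ->
     typ y1 = s2 -> typ y2 = s2 -> typ y3 = s2 -> typ w = s1 ->
     NoDup [x1; y1; x2; w; x3; y2; x4; y3] ->
     adj tri x1 y1 -> adj tri y1 x2 -> adj tri x2 w -> adj tri w x3 ->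
     adj tri x3 y2 -> adj tri y2 x4 -> adj tri x4 y3 -> adj tri y3 x1 ->
     exists z m, typ z = s1 /\ typ m = s2 /\
       face3 tri z x1 y1 /\ face3 tri z y1 x2 /\ face3 tri z x2 m /\
       face3 tri z m x3 /\ face3 tri z x3 y2 /\ face3 tri z y2 x4 /\
       face3 tri z x4 y3 /\ face3 tri z y3 x1 /\
       face3 tri m x2 w /\ face3 tri m w x3)
  (* (6) *)
  (H6 : ~ exists f : nat -> V,
     (forall i j, i < 10 -> j < 10 -> f i = f j -> i = j) /\
     (forall i, i < 10 ->
        adj tri (f i) (f (S i mod 10)) /\
        ((typ (f i) = s3 /\ typ (f (S i mod 10)) = s2) \/
         (typ (f i) = s2 /\ typ (f (S i mod 10)) = s3)))) :
  flag tri.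
Proof.
  intros l Hne Hl. split; [exact Hne |].
  apply (clique_covered V typ tri HX); [| exact Hne | exact Hl].
  intros y x z Ty Ayx Ayz Tx Tz.
  exact (proj2 (proj1 (H3 y Ty) x z Ayx Ayz) (or_introl (conj Tx Tz))).
Qed.
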